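(* Let $\{D_1,D_2,D_3\}$ be a positively oriented orthonormal basis of $\mathbb{R}^3$ and let $J$ be a symmetric positive definite linear map $\mathbb{R}^3\to\mathbb{R}^3$ having $D_3$ as an eigenvector. Let $\Lambda:[0,T]\to SO(3)$ be a smooth curve and $\mu:[0,T]\to\mathbb{R}$ a function such that, for all $t\in[0,T]$, $$\nabla_{\dot d_3}\pi_\perp+\pi_\parallel\,\dot d_3=0,\qquad \dot\pi_\parallel+\pi_\perp\cdot\dot d_3+\mu=0,\qquad w\cdot d_3=0 .$$ Then the kinetic energy $K=\tfrac12 W\cdot JW=\tfrac12 w\cdot jw$ and the quantities $$\Pi^1=D_1\cdot\Pi=d_1\cdot\pi,\qquad \Pi^2=D_2\cdot\Pi=d_2\cdot\pi$$ are constant on $[0,T]$.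
   Context: Notation: $d_i(t)=\Lambda(t)D_i$ for $i=1,2,3$. For $v\in\mathbb{R}^3$, $\hat v$ denotes the skew-symmetric matrix with $\hat v a=v\times a$. The spatial angular velocity $w$ and convected angular velocity $W$ are defined by $\dot\Lambda=\hat w\Lambda=\Lambda\hat W$ (so $W=\Lambda^Tw$). The spatial inertia is $j=\Lambda J\Lambda^T$; the spatial angular momentum is $\pi=jw$ and the convected one is $\Pi=\Lambda^T\pi=JW$. Split $\pi=\pi_\perp+\pi_\parallel d_3$ with $\pi_\parallel=\pi\cdot d_3$ and $\pi_\perp=(I-d_3\otimes d_3)\pi$. For a curve $v(t)$ with $v(t)\cdot d_3(t)=0$, the covariant derivative on the unit sphere along $d_3$ is $\nabla_{\dot d_3}v:=(I-d_3\otimes d_3)\dot v$. The condition $w\cdot d_3=0$ is the non-twisting (nonholonomic) constraint and $\mu$ is the associated Lagrange multiplier; no external moments act. *)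

From HB Require Import structures.
From mathcomp Require Import all_boot all_order all_algebra.
From mathcomp Require Import all_classical all_reals all_analysis.
Set Implicit Arguments. Unset Strict Implicit. Unset Printing Implicit Defensive.
Import Order.TTheory GRing.Theory Num.Theory.
Import numFieldNormedType.Exports.
Local Open Scope ring_scope.

Section Rigid.
Variable R : realType.

Definition dotv (u v : 'cV[R]_3) : R := (u^T *m v) 0 0.

(* hat v : skew-symmetric matrix with hat v *m a = v x a *)
Definition hat (v : 'cV[R]_3) : 'M[R]_3 :=
  \matrix_(i < 3, j < 3)
    (if (i == 0 :> nat) && (j == 1 :> nat) then - v 2%:R 0
     else if (i == 0 :> nat) && (j == 2 :> nat) then v 1 0
     else if (i == 1 :> nat) && (j == 0 :> nat) then v 2%:R 0
     else if (i == 1 :> nat) && (j == 2 :> nat) then - v 0 0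
     else if (i == 2 :> nat) && (j == 0 :> nat) then - v 1 0
     else if (i == 2 :> nat) && (j == 1 :> nat) then v 0 0
     else 0).

(* inverse of hat on skew-symmetric matrices *)
Definition vee (A : 'M[R]_3) : 'cV[R]_3 :=
  \col_(i < 3) (if i == 0 :> nat then A 2%:R 1
                else if i == 1 :> nat then A 0 2%:R else A 1 0).

Definition frame_mx (D1 D2 D3 : 'cV[R]_3) : 'M[R]_3 :=
  \matrix_(i < 3, j < 3)
    (if j == 0 :> nat then D1 i 0 else if j == 1 :> nat then D2 i 0 else D3 i 0).

Definition orthonormal_pos_basis (D1 D2 D3 : 'cV[R]_3) : Prop :=
  [/\ dotv D1 D1 = 1, dotv D2 D2 = 1 & dotv D3 D3 = 1] /\
  [/\ dotv D1 D2 = 0, dotv D1 D3 = 0 & dotv D2 D3 = 0] /\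
  \det (frame_mx D1 D2 D3) = 1.

Definition sym_posdef (J : 'M[R]_3) : Prop :=
  J^T = J /\ forall v : 'cV[R]_3, v != 0 -> 0 < dotv v (J *m v).

Definition is_SO3 (A : 'M[R]_3) : Prop := A^T *m A = 1%:M /\ \det A = 1.

Definition smooth_curve (L : R -> 'M[R]_3) : Prop :=
  forall (n : nat) (t : R), derivable (derive1n n L) t 1.

Variables (J : 'M[R]_3) (L : R -> 'M[R]_3).

Definition dvec (D : 'cV[R]_3) (t : R) : 'cV[R]_3 := L t *m D.
(* spatial angular velocity: \dot Lambda = hat w Lambda, i.e. hat w = \dot Lambda Lambda^T *)
Definition w_sp (t : R) : 'cV[R]_3 := vee (derive1 L t *m (L t)^T).
Definition W_cv (t : R) : 'cV[R]_3 := (L t)^T *m w_sp t.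
Definition j_sp (t : R) : 'M[R]_3 := L t *m J *m (L t)^T.
Definition pi_sp (t : R) : 'cV[R]_3 := j_sp t *m w_sp t.
Definition Pi_cv (t : R) : 'cV[R]_3 := J *m W_cv t.
Definition pi_par (D3 : 'cV[R]_3) (t : R) : R := dotv (pi_sp t) (dvec D3 t).
Definition proj_perp (D3 : 'cV[R]_3) (t : R) : 'M[R]_3 :=
  1%:M - dvec D3 t *m (dvec D3 t)^T.
Definition pi_perp (D3 : 'cV[R]_3) (t : R) : 'cV[R]_3 :=
  proj_perp D3 t *m pi_sp t.
Definition cov_deriv (D3 : 'cV[R]_3) (v : R -> 'cV[R]_3) (t : R) : 'cV[R]_3 :=
  proj_perp D3 t *m derive1 v t.
Definition kinetic (t : R) : R := 2^-1 * dotv (W_cv t) (J *m W_cv t).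

End Rigid.

From HB Require Import structures.
From mathcomp Require Import all_boot all_order all_algebra.
From mathcomp Require Import all_classical all_reals all_analysis.
From mathcomp Require Import ring lra.
Import Order.TTheory GRing.Theory Num.Theory.
Import numFieldNormedType.Exports.
Local Open Scope ring_scope.
Local Open Scope classical_set_scope.

(* Because [D3] is a principal axis of [J], the non-twisting constraint [w . d3 = 0]
   forces [Pi . D3 = lam W . D3 = w . d3 = 0]; hence [pi_par = 0] and [pi_perp = pi = Lambda Pi]
   near every interior time.  Writing [d/dt (Lambda Pi) = w x pi + Lambda Pi'], the term
   [w x pi] is parallel to [d3] (both factors are normal to it), so the first equation says
   that [Lambda Pi'] is parallel to [d3]; differentiating [Pi . D3 = 0] gives [Pi' . D3 = 0],
   so [Pi' = 0].  The whole convected momentum is therefore constant, and so is [K], whose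
   derivative is [W . Pi']. *)

Section MatrixDerivatives.
Context {R : realType} {V : normedModType R} {a v : V}.

Lemma is_derive_mx {m n} (M : V -> 'M[R]_(m, n)) (dM : 'M[R]_(m, n)) :
  (forall i j, is_derive a v (fun x => M x i j) (dM i j)) -> is_derive a v M dM.
Proof.
move=> dMij; have dMv : derivable M a v.
  by apply/derivable_mxP => i j; exact: ex_derive.
split=> //; rewrite derive_mx //; apply/matrixP => i j.
by rewrite mxE derive_val.
Qed.

Lemma is_derive_mx_entry {m n} {M : V -> 'M[R]_(m, n)} {dM : 'M[R]_(m, n)} i j :
  is_derive a v M dM -> is_derive a v (fun x => M x i j) (dM i j).
Proof.
move=> [dMv <-]; split; first by move/derivable_mxP: dMv.
by rewrite derive_mx // mxE.
Qed.

Lemma is_derive_mulmx {m n p} {M : V -> 'M[R]_(m, n)} {N : V -> 'M[R]_(n, p)} {dM dN} :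
  is_derive a v M dM -> is_derive a v N dN ->
  is_derive a v (fun x => M x *m N x) (dM *m N a + M a *m dN).
Proof.
move=> dMv dNv; apply: is_derive_mx => i k.
have -> : (fun x => (M x *m N x) i k) =
          \sum_(j < n) ((fun x => M x i j) * (fun x => N x j k)).
  by apply/funext => x; rewrite mxE fct_sumE.
apply: is_derive_eq.
  apply: is_derive_sum => j.
  exact: is_deriveM (is_derive_mx_entry i j dMv) (is_derive_mx_entry j k dNv).
rewrite !mxE -big_split; apply: eq_bigr => j _ /=.
by rewrite /GRing.scale /= addrC mulrC [X in _ + X]mulrC.
Qed.

Lemma is_derive_mulmxl {m n p} (K : 'M[R]_(m, n)) {N : V -> 'M[R]_(n, p)} {dN} :
  is_derive a v N dN -> is_derive a v (fun x => K *m N x) (K *m dN).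
Proof.
move=> dNv; apply: is_derive_eq (is_derive_mulmx (is_derive_cst K a v) dNv) _.
by rewrite mul0mx add0r.
Qed.

Lemma is_derive_mulmxr {m n p} {M : V -> 'M[R]_(m, n)} (K : 'M[R]_(n, p)) {dM} :
  is_derive a v M dM -> is_derive a v (fun x => M x *m K) (dM *m K).
Proof.
move=> dMv; apply: is_derive_eq (is_derive_mulmx dMv (is_derive_cst K a v)) _.
by rewrite mulmx0 addr0.
Qed.

Lemma is_derive_mx_select {m n p q} (F : 'M[R]_(m, n) -> 'M[R]_(p, q))
    (r : 'I_p -> 'I_q -> 'I_m) (c : 'I_p -> 'I_q -> 'I_n) {M dM} :
  (forall A i j, F A i j = A (r i j) (c i j)) ->
  is_derive a v M dM -> is_derive a v (fun x => F (M x)) (F dM).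
Proof.
move=> FE dMv; apply: is_derive_mx => i j; rewrite FE.
under eq_fun do rewrite FE.
exact: is_derive_mx_entry.
Qed.

Lemma is_derive_trmx {m n} {M : V -> 'M[R]_(m, n)} {dM} :
  is_derive a v M dM -> is_derive a v (fun x => (M x)^T) dM^T.
Proof.
by apply: (is_derive_mx_select (@trmx R m n) (fun i j => j) (fun i j => i)) => A i j;
  rewrite mxE.
Qed.

Lemma is_derive_vee {M : V -> 'M[R]_3} {dM} :
  is_derive a v M dM -> is_derive a v (fun x => vee (M x)) (vee dM).
Proof.
apply: (is_derive_mx_select (@vee R)
  (fun i _ => if i == 0 :> nat then 2%:R else if i == 1 :> nat then 0 else 1)
  (fun i _ => if i == 0 :> nat then 1 else if i == 1 :> nat then 2%:R else 0)).
by move=> A i j; rewrite mxE; case: ifP => _ //; case: ifP.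
Qed.

End MatrixDerivatives.

Section DotProduct.
Context {R : realType}.
Implicit Types u v : 'cV[R]_3.

Lemma trmx_mul_eq0C {m n k} {A : 'M[R]_(m, n)} {B : 'M[R]_(m, k)} :
  A^T *m B = 0 -> B^T *m A = 0.
Proof. by move=> AB; rewrite -[A]trmxK -trmx_mul AB trmx0. Qed.

Lemma dotvE u v : u^T *m v = (dotv u v)%:M.
Proof. exact: mx11_scalar. Qed.

Lemma dotvC u v : dotv u v = dotv v u.
Proof. by rewrite /dotv -[u^T *m v]trmxK trmx_mul trmxK mxE. Qed.

Lemma dotv_sym_mx (J : 'M[R]_3) u v : J^T = J -> dotv u (J *m v) = dotv (J *m u) v.
Proof. by move=> J_sym; rewrite /dotv trmx_mul J_sym mulmxA. Qed.

Lemma dotv0 u : dotv u 0 = 0.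
Proof. by rewrite /dotv mulmx0 mxE. Qed.

Lemma proj_orth_id (d x : 'cV[R]_3) : d^T *m x = 0 -> (1%:M - d *m d^T) *m x = x.
Proof. by move=> dx; rewrite mulmxBl mul1mx -mulmxA dx mulmx0 subr0. Qed.

Context {V : normedModType R} {a h : V}.

Lemma is_derive_dotv {u w : V -> 'cV[R]_3} {du dw} :
  is_derive a h u du -> is_derive a h w dw ->
  is_derive a h (fun x => dotv (u x) (w x)) (dotv du (w a) + dotv (u a) dw).
Proof.
move=> du_a dw_a.
apply: is_derive_eq (is_derive_mx_entry 0 0 (is_derive_mulmx (is_derive_trmx du_a) dw_a)) _.
by rewrite mxE.
Qed.

Lemma is_derive_dotvl u {w : V -> 'cV[R]_3} {dw} :
  is_derive a h w dw -> is_derive a h (fun x => dotv u (w x)) (dotv u dw).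
Proof.
move=> dw_a; apply: is_derive_eq (is_derive_dotv (is_derive_cst u a h) dw_a) _.
by rewrite dotvC dotv0 add0r.
Qed.

End DotProduct.

Section HatAlgebra.
Context {R : realType}.
Implicit Types (a b d p w : 'cV[R]_3) (O : 'M[R]_3).

Lemma ord3P (i : 'I_3) : [\/ i = 0, i = 1 | i = 2%:R].
Proof.
by case: i => [[|[|[|i]]] hi] //; [constructor 1|constructor 2|constructor 3];
  apply: val_inj.
Qed.

Lemma sum_ord3 (F : 'I_3 -> R) : \sum_(i < 3) F i = F 0 + F 1 + F 2%:R.
Proof.
by rewrite !big_ord_recl big_ord0 addr0 addrA; congr (F _ + F _ + F _); apply: val_inj.
Qed.

Lemma hat_mul_hat a b : hat a *m hat b = b *m a^T - (a^T *m b) 0 0 *: 1%:M.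
Proof.
apply/matrixP => i j; rewrite !mxE !sum_ord3 !mxE.
by case: (ord3P i) => ->; case: (ord3P j) => -> /=; rewrite big_ord1 !mxE; ring.
Qed.

Lemma hat_vee O : O^T = - O -> hat (vee O) = O.
Proof.
move=> skO; have Oji i j : O j i = - O i j.
  by have := congr1 (fun A : 'M[R]_3 => A i j) skO; rewrite !mxE.
have Oii i : O i i = 0 by have := Oji i i; lra.
apply/matrixP => i j; rewrite !mxE.
by case: (ord3P i) => ->; case: (ord3P j) => -> /=; rewrite ?Oii // -?Oji ?opprK.
Qed.

Lemma proj_hat_mul w p d : w^T *m d = 0 -> p^T *m d = 0 -> d^T *m d = 1%:M ->
  (1%:M - d *m d^T) *m (hat w *m p) = 0.
Proof.
move=> wd pd dd; have dw := trmx_mul_eq0C wd; have dp := trmx_mul_eq0C pd.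
have -> : 1%:M - d *m d^T = - (hat d *m hat d) by rewrite hat_mul_hat dd mxE scale1r opprB.
rewrite mulNmx -mulmxA (mulmxA (hat d) (hat w)) hat_mul_hat dw mxE scale0r subr0.
by rewrite -!mulmxA dp !mulmx0 oppr0.
Qed.

End HatAlgebra.

Lemma derive_eq0_const_itvcc {R : realType} (f : R -> R) {a b s t : R} :
  s \in `[a, b] -> t \in `[a, b] ->
  (forall x, derivable f x 1) -> (forall x, x \in `]a, b[ -> 'D_1 f x = 0) ->
  f s = f t.
Proof.
move=> sab tab df df0.
have cf : {within `[a, b], continuous f}.
  apply: continuous_subspaceT => x.
  exact/differentiable_continuous/derivable1_diffP.
have df' x : x \in `]a, b[%R -> derivable f x 1 by [].
have df0' x : x \in `]a, b[%R -> f^`() x = 0.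
  by move=> xab; rewrite derive1E df0 // inE.
have ge0 x : x \in `]a, b[%R -> 0 <= f^`() x by move/df0' ->.
have le0 x : x \in `]a, b[%R -> f^`() x <= 0 by move/df0' ->.
move: sab tab; rewrite !inE.
wlog st : s t / s <= t.
  by move=> wlog_st; case: (leP s t) => [|/ltW] st; [|symmetry]; exact: wlog_st.
move=> sab tab; apply/le_anti/andP; split.
- exact: (ger0_derive1_le_cc df' ge0 cf).
- exact: (ler0_derive1_le_cc df' le0 cf).
Qed.

Lemma near_itvoo_itvcc {R : realType} {a b t : R} :
  t \in `]a, b[ -> \forall x \near t, x \in `[a, b].
Proof.
rewrite inE => tab; apply: filterS (near_in_itvoo tab) => x.
by rewrite in_itv /= => /andP[ax xb]; rewrite inE /= in_itv /= !ltW.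
Qed.

Section RigidBody.
Context {R : realType} {J : 'M[R]_3} {L : R -> 'M[R]_3} {e : 'cV[R]_3} {lam : R}.
Hypotheses (J_sym : J^T = J) (J_e : J *m e = lam *: e).
Implicit Types t : R.

Lemma pi_sp_Pi_cv t : pi_sp J L t = L t *m Pi_cv J L t.
Proof. by rewrite /pi_sp /j_sp /Pi_cv /W_cv !mulmxA. Qed.

Lemma Pi_cv_dot_axis t : (Pi_cv J L t)^T *m e = lam *: ((w_sp L t)^T *m dvec L e t).
Proof.
by rewrite /Pi_cv /W_cv /dvec !trmx_mul J_sym trmxK -!mulmxA J_e !scalemxAr.
Qed.

Lemma pi_sp_dot_dvec t : (L t)^T *m L t = 1%:M ->
  (pi_sp J L t)^T *m dvec L e t = (Pi_cv J L t)^T *m e.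
Proof.
by move=> LtL; rewrite pi_sp_Pi_cv /dvec trmx_mul -mulmxA (mulmxA (L t)^T) LtL mul1mx.
Qed.

Lemma derive_rotation t : derivable L t 1 ->
  (\forall x \near t, (L x)^T *m L x = 1%:M) -> 'D_1 L t = hat (w_sp L t) *m L t.
Proof.
move=> dL LtL; have LLt : \forall x \near t, L x *m (L x)^T = 1%:M.
  by apply: filterS LtL => x /mulmx1C.
have dLLt := is_derive_mulmx (derivableP dL) (is_derive_trmx (derivableP dL)).
have skew : 'D_1 L t *m (L t)^T + L t *m ('D_1 L t)^T = 0.
  by case: dLLt => _ <-; rewrite (near_eq_derive _ LLt) derive_cst.
have {}skew : ('D_1 L t *m (L t)^T)^T = - ('D_1 L t *m (L t)^T).
  by rewrite trmx_mul trmxK; apply/eqP; rewrite -addr_eq0 addrC skew.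
rewrite /w_sp -derive1E hat_vee; last by rewrite derive1E.
by rewrite derive1E -mulmxA (nbhs_singleton LtL) mulmx1.
Qed.

Lemma derivable_W_cv t : smooth_curve L -> derivable (W_cv L) t 1.
Proof.
move=> sL; have dL : derivable L t 1 := sL 0%N t.
have dL' : derivable (derive1 L) t 1 := sL 1%N t.
have dw := is_derive_vee (is_derive_mulmx (derivableP dL') (is_derive_trmx (derivableP dL))).
by case: (is_derive_mulmx (is_derive_trmx (derivableP dL)) dw).
Qed.

Lemma is_derive_Pi_cv t : smooth_curve L ->
  is_derive t 1 (Pi_cv J L) (J *m 'D_1 (W_cv L) t).
Proof. by move=> sL; case: (is_derive_mulmxl J (derivableP (derivable_W_cv t sL))). Qed.

Lemma is_derive_kinetic t : smooth_curve L ->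
  is_derive t 1 (kinetic J L) (dotv (W_cv L t) ('D_1 (Pi_cv J L) t)).
Proof.
move=> sL; have dW := derivableP (derivable_W_cv t sL).
have -> : kinetic J L = 2^-1 \*: (fun x => dotv (W_cv L x) (J *m W_cv L x)) by [].
apply: is_derive_eq (is_deriveZ (2^-1) (is_derive_dotv dW (is_derive_mulmxl J dW))) _.
case: (is_derive_Pi_cv t sL) => _ ->; rewrite dotv_sym_mx // dotvC.
by move: (dotv _ _) => x; rewrite /GRing.scale /=; lra.
Qed.

Lemma near_pi_sp_orth t :
  (\forall x \near t, (L x)^T *m L x = 1%:M) ->
  (\forall x \near t, dotv (w_sp L x) (dvec L e x) = 0) ->
  \forall x \near t, (pi_sp J L x)^T *m dvec L e x = 0.
Proof.
move=> LtL wd0; apply: filterS2 LtL wd0 => x LtLx wdx.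
by rewrite pi_sp_dot_dvec // Pi_cv_dot_axis dotvE wdx raddf0 scaler0.
Qed.

Lemma dvec_unit t : (L t)^T *m L t = 1%:M -> e^T *m e = 1%:M ->
  (dvec L e t)^T *m dvec L e t = 1%:M.
Proof. by move=> LtL ee; rewrite /dvec trmx_mul -mulmxA (mulmxA (L t)^T) LtL mul1mx. Qed.

Lemma derive_Pi_cv_eq0 t : smooth_curve L -> e^T *m e = 1%:M ->
  (\forall x \near t, (L x)^T *m L x = 1%:M) ->
  (\forall x \near t, dotv (w_sp L x) (dvec L e x) = 0) ->
  cov_deriv L e (pi_perp J L e) t + pi_par J L e t *: derive1 (dvec L e) t = 0 ->
  'D_1 (Pi_cv J L) t = 0.
Proof.
move=> sL ee LtL wd0 eq_perp.
have dL : derivable L t 1 := sL 0%N t.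
have [/derivableP dPi _] := is_derive_Pi_cv t sL.
have pid := near_pi_sp_orth _ LtL wd0.
have Pie : \forall x \near t, (Pi_cv J L x)^T *m e = 0.
  by apply: filterS2 LtL pid => x LtLx; rewrite pi_sp_dot_dvec.
have perp : \forall x \near t, pi_perp J L e x = pi_sp J L x.
  by apply: filterS pid => x /trmx_mul_eq0C; exact: proj_orth_id.
have par0 : pi_par J L e t = 0 by rewrite /pi_par /dotv (nbhs_singleton pid) mxE.
have Dpi : 'D_1 (pi_sp J L) t =
    hat (w_sp L t) *m pi_sp J L t + L t *m 'D_1 (Pi_cv J L) t.
  rewrite (_ : pi_sp J L = fun x => L x *m Pi_cv J L x); last first.
    by apply/funext => x; exact: pi_sp_Pi_cv.
  case: (is_derive_mulmx (derivableP dL) dPi) => _ ->.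
  by rewrite derive_rotation // mulmxA.
have proj_LdPi : proj_perp L e t *m (L t *m 'D_1 (Pi_cv J L) t) = 0.
  move: eq_perp; rewrite /cov_deriv par0 scale0r addr0 derive1E (near_eq_derive _ perp).
  rewrite Dpi mulmxDr /proj_perp proj_hat_mul ?add0r //.
  - by rewrite dotvE (nbhs_singleton wd0) raddf0.
  - exact: nbhs_singleton pid.
  - exact: dvec_unit _ (nbhs_singleton LtL) ee.
have edPi : ('D_1 (Pi_cv J L) t)^T *m e = 0.
  case: (is_derive_mulmxr e (is_derive_trmx dPi)) => _ <-.
  by rewrite (near_eq_derive _ Pie) derive_cst.
have LdPi : L t *m 'D_1 (Pi_cv J L) t = 0.
  rewrite -proj_LdPi /proj_perp proj_orth_id // /dvec trmx_mul -mulmxA.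
  by rewrite (mulmxA (L t)^T) (nbhs_singleton LtL) mul1mx (trmx_mul_eq0C edPi).
by rewrite -[LHS]mul1mx -(nbhs_singleton LtL) -mulmxA LdPi mulmx0.
Qed.

End RigidBody.

Theorem theorem6 (R : realType) (D1 D2 D3 : 'cV[R]_3) (J : 'M[R]_3)
  (T : R) (L : R -> 'M[R]_3) (mu : R -> R) :
  orthonormal_pos_basis D1 D2 D3 ->
  sym_posdef J ->
  (exists lam : R, J *m D3 = lam *: D3) ->
  smooth_curve L ->
  (forall t, t \in `[0, T] -> is_SO3 (L t)) ->
  (forall t, t \in `[0, T] ->
     cov_deriv L D3 (pi_perp J L D3) t
       + pi_par J L D3 t *: derive1 (dvec L D3) t = 0) ->
  (forall t, t \in `[0, T] ->
     derive1 (pi_par J L D3) t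
       + dotv (pi_perp J L D3 t) (derive1 (dvec L D3) t) + mu t = 0) ->
  (forall t, t \in `[0, T] -> dotv (w_sp L t) (dvec L D3 t) = 0) ->
  forall s t, s \in `[0, T] -> t \in `[0, T] ->
    [/\ kinetic J L s = kinetic J L t,
        dotv D1 (Pi_cv J L s) = dotv D1 (Pi_cv J L t) &
        dotv D2 (Pi_cv J L s) = dotv D2 (Pi_cv J L t)].
Proof.
(* The second equation only determines the multiplier [mu]. *)
move=> [[_ _ D3_unit] _] [J_sym _] [lam J_D3] sL SO eq_perp _ wd0 s t sT tT.
have D3D3 : D3^T *m D3 = 1%:M by rewrite dotvE D3_unit.
have dPi_eq0 x : x \in `]0, T[ -> 'D_1 (Pi_cv J L) x = 0.
  move=> xT; have nearT := near_itvoo_itvcc xT.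
  apply: (derive_Pi_cv_eq0 J_sym J_D3 x sL D3D3).
  - by apply: filterS nearT => y /SO[].
  - by apply: filterS nearT => y /wd0.
  - exact/eq_perp/(nbhs_singleton nearT).
have dPi (x : R) : is_derive x 1 (Pi_cv J L) ('D_1 (Pi_cv J L) x).
  by case: (is_derive_Pi_cv (J := J) x sL) => /derivableP.
have const_Pi (D : 'cV[R]_3) : dotv D (Pi_cv J L s) = dotv D (Pi_cv J L t).
  apply: (derive_eq0_const_itvcc (fun x => dotv D (Pi_cv J L x)) sT tT).
  - by move=> x; case: (is_derive_dotvl D (dPi x)).
  - by move=> x /dPi_eq0 dPi0; case: (is_derive_dotvl D (dPi x)) => _ ->; rewrite dPi0 dotv0.
split; [|exact: const_Pi..].
apply: (derive_eq0_const_itvcc (kinetic J L) sT tT).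
- by move=> x; case: (is_derive_kinetic J_sym x sL).
- by move=> x /dPi_eq0 dPi0; case: (is_derive_kinetic J_sym x sL) => _ ->; rewrite dPi0 dotv0.
Qed.
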